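(* Let $H^2=H^2(\mathbb{D})$ be the Hardy space on the open unit disc. The differentiation operator $D:f\mapsto f'$ with domain $\mathcal{E}=\{f\in H^2: f'\in H^2\}$ is frequently hypercyclic on $H^2$.
   Context: A (possibly unbounded) densely defined operator $T$ in $X$ is frequently hypercyclic if there is $f\in D(T)$ with $T^nf\in D(T)$ for all $n\ge1$ such that for every non-empty open $U\subset X$ the set $\{n\in\mathbb{N}: T^nf\in U\}$ has positive lower density, where the lower density of $E\subset\mathbb{N}$ is $\liminf_{N\to\infty}\#(E\cap\{1,\dots,N\})/N$. *)

From Stdlib Require Import Reals Lra ClassicalDescription.
From Coquelicot Require Import Coquelicot.
Open Scope R_scope.

(** The Hardy space H^2(D), realised (isometrically, as usual) through Taylor
    coefficients: f(z) = sum_n a n z^n with sum_n |a n|^2 < oo, and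
    ||f||_{H^2}^2 = sum_n |a n|^2. *)
Definition coeffs := nat -> C.

Definition in_H2 (a : coeffs) : Prop :=
  ex_series (fun n => (Cmod (a n))^2).

Definition H2_norm (a : coeffs) : R :=
  sqrt (Series (fun n => (Cmod (a n))^2)).

Definition H2_dist (a b : coeffs) : R :=
  H2_norm (fun n => Cminus (a n) (b n)).

Definition H2_open (U : coeffs -> Prop) : Prop :=
  (forall g, U g -> in_H2 g) /\
  (forall g, U g -> exists eps, 0 < eps /\
      forall h, in_H2 h -> H2_dist g h < eps -> U h).

(** Differentiation f |-> f' on Taylor coefficients:
    (sum a_n z^n)' = sum (n+1) a_{n+1} z^n. *)
Definition Dop (a : coeffs) : coeffs :=
  fun n => Cmult (RtoC (INR (S n))) (a (S n)).

Definition in_dom_D (a : coeffs) : Prop := in_H2 a /\ in_H2 (Dop a).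

Fixpoint count_upto (E : nat -> Prop) (N : nat) : nat :=
  match N with
  | O => O
  | S m => (count_upto E m +
            (if excluded_middle_informative (E (S m)) then 1 else 0))%nat
  end.

Definition lower_density (E : nat -> Prop) : Rbar :=
  LimInf_seq (fun N => INR (count_upto E N) / INR N).

Definition D_frequently_hypercyclic_H2 : Prop :=
  exists f : coeffs,
    in_dom_D f /\
    (forall n : nat, (1 <= n)%nat -> in_dom_D (Nat.iter n Dop f)) /\
    (forall U : coeffs -> Prop, H2_open U -> (exists g, U g) ->
       Rbar_lt (Finite 0)
         (lower_density (fun n => U (Nat.iter n Dop f)))).

From Stdlib Require Import Reals Lra Lia ZArith Cantor.
From Stdlib Require Import ClassicalDescription FunctionalExtensionality.
From Coquelicot Require Import Coquelicot.
Open Scope R_scope.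

(** Write [f = sum_p b_p z^p / p!], so that [D^n f = sum_m b_(n+m) z^m / m!].
    Enumerate a dense sequence [q_k] of polynomials with dyadic Gaussian
    coefficients and let [A_k] ([hit_set]) be the multiples of a fast growing
    period [P_k] that are far from every multiple of a later period [P_j]:
    these sets have lower density at least [1 / (2 P_k)], and they are so well
    separated that the windows [[n, n + deg q_k]] for [n] in [A_k] ([k]
    arbitrary) are pairwise disjoint and far apart.  Put [b_(n+m) = m! q_k,m]
    on the window of each [n] in [A_k] and [b = 0] elsewhere.  Then
    [|b_p| <= p], so every [D^n f] lies in [H^2]; and for [n] in [A_k], [D^n f]
    begins with the coefficients of [q_k], while beyond them [|b_(n+m)| <= m]
    makes its coefficients smaller than [8 / 2^m].  Hence [D^n f] is close to
    [q_k] whenever [q_k] is long and close to a given [g]. *)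

(** * Counting and lower density *)

Lemma count_upto_mono (E F : nat -> Prop) (N : nat) :
  (forall n, (1 <= n <= N)%nat -> E n -> F n) ->
  (count_upto E N <= count_upto F N)%nat.
Proof.
  induction N as [|N IH]; intros EF; simpl; [lia|].
  specialize (IH (fun n Hn => EF n ltac:(lia))).
  destruct (excluded_middle_informative (E (S N))) as [e|e];
  destruct (excluded_middle_informative (F (S N))) as [f|f]; try lia.
  exfalso; apply f, EF; [lia|exact e].
Qed.

Lemma count_upto_ext (E F : nat -> Prop) (N : nat) :
  (forall n, E n <-> F n) -> count_upto E N = count_upto F N.
Proof.
  intros EF. apply Nat.le_antisymm; apply count_upto_mono; intros n _; apply EF.
Qed.

Lemma count_upto_monoN (E : nat -> Prop) (M N : nat) :
  (M <= N)%nat -> (count_upto E M <= count_upto E N)%nat.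
Proof.
  induction 1 as [|N _ IH]; simpl; [lia|].
  destruct (excluded_middle_informative (E (S N))); lia.
Qed.

Lemma count_upto_union (E F : nat -> Prop) (N : nat) :
  (count_upto (fun n => E n \/ F n) N <= count_upto E N + count_upto F N)%nat.
Proof.
  induction N as [|N IH]; simpl; [lia|].
  destruct (excluded_middle_informative (E (S N) \/ F (S N))) as [[e|f]|];
  destruct (excluded_middle_informative (E (S N)));
  destruct (excluded_middle_informative (F (S N))); tauto || lia.
Qed.

Lemma count_upto_interval (E : nat -> Prop) (a b N : nat) :
  (forall n, E n -> (a <= n <= b)%nat) -> (count_upto E N <= S b - a)%nat.
Proof.
  intros Hab.
  enough (H : (count_upto E N <= S (Nat.min N b) - a)%nat) by lia.
  induction N as [|N IH]; cbn [count_upto]; [lia|].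
  destruct (excluded_middle_informative (E (S N))) as [e|e]; [|lia].
  specialize (Hab _ e). lia.
Qed.

Lemma count_upto_multiples (E : nat -> Prop) (P N : nat) :
  (0 < P)%nat -> (forall t, (1 <= t)%nat -> E (t * P)%nat) ->
  (N / P <= count_upto E N)%nat.
Proof.
  intros HP HE.
  assert (Ht : forall t, (t <= count_upto E (t * P))%nat).
  { induction t as [|t IH]; [lia|].
    destruct (S t * P)%nat as [|M] eqn:EM; [lia|]. simpl.
    destruct (excluded_middle_informative (E (S M))) as [e|e].
    - assert (count_upto E (t * P) <= count_upto E M)%nat
        by (apply count_upto_monoN; lia). lia.
    - exfalso. apply e. rewrite <- EM. apply HE. lia. }
  eapply Nat.le_trans; [apply Ht|]. apply count_upto_monoN.
  rewrite Nat.mul_comm. apply Nat.Div0.mul_div_le.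
Qed.

Lemma count_upto_empty (E : nat -> Prop) (N : nat) :
  (forall n, ~ E n) -> count_upto E N = 0%nat.
Proof.
  intros HE. induction N as [|N IH]; cbn [count_upto]; [reflexivity|].
  destruct (excluded_middle_informative (E (S N))) as [e|]; [now destruct (HE _ e)|lia].
Qed.

Lemma count_upto_exists_lt_split (E : nat -> nat -> Prop) (T N : nat) :
  (count_upto (fun n => exists i, (i < S T)%nat /\ E i n) N <=
   count_upto (fun n => exists i, (i < T)%nat /\ E i n) N + count_upto (E T) N)%nat.
Proof.
  eapply Nat.le_trans; [|apply count_upto_union].
  apply count_upto_mono. intros n _ [i [Hi Ei]].
  destruct (Nat.eq_dec i T) as [->|]; [now right|left; exists i; split; [lia|exact Ei]].
Qed.

Lemma count_upto_exists_lt (E : nat -> nat -> Prop) (c T N : nat) :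
  (forall i, (i < T)%nat -> (count_upto (E i) N <= c)%nat) ->
  (count_upto (fun n => exists i, (i < T)%nat /\ E i n) N <= T * c)%nat.
Proof.
  induction T as [|T IH]; intros Hc.
  - rewrite count_upto_empty; [lia|]. intros n [i [Hi _]]. lia.
  - eapply Nat.le_trans; [apply count_upto_exists_lt_split|].
    specialize (IH (fun i Hi => Hc i ltac:(lia))). specialize (Hc T ltac:(lia)). lia.
Qed.

Lemma count_upto_exists_lt_geom (E : nat -> nat -> Prop) (c : R) (T N : nat) :
  (forall i, (i < T)%nat -> INR (count_upto (E i) N) <= c / 2 ^ S i) ->
  INR (count_upto (fun n => exists i, (i < T)%nat /\ E i n) N) <= c * (1 - / 2 ^ T).
Proof.
  induction T as [|T IH]; intros Hc.
  - rewrite count_upto_empty; [simpl; lra|]. intros n [i [Hi _]]. lia.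
  - eapply Rle_trans; [apply le_INR, count_upto_exists_lt_split|]. rewrite plus_INR.
    specialize (IH (fun i Hi => Hc i ltac:(lia))). specialize (Hc T ltac:(lia)).
    assert (E2 : c * (1 - / 2 ^ S T) = c * (1 - / 2 ^ T) + c / 2 ^ S T).
    { simpl. field. apply pow_nonzero. lra. }
    lra.
Qed.

Lemma lower_density_pos (E : nat -> Prop) (c : R) (N0 : nat) :
  0 < c -> (forall N, (N0 <= N)%nat -> INR N * c <= INR (count_upto E N)) ->
  Rbar_lt 0 (lower_density E).
Proof.
  intros Hc HE. apply (Rbar_lt_le_trans _ c); [exact Hc|].
  rewrite <- (LimInf_seq_const c). apply LimInf_le.
  exists (S N0). intros N HN.
  assert (HN0 : 0 < INR N) by (apply lt_0_INR; lia).
  apply Rle_div_r; [exact HN0|]. rewrite Rmult_comm. apply HE. lia.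
Qed.

(** * Well-separated sets of positive lower density *)

Section HitSets.

Variable G : nat -> nat.
Hypothesis G_mono : forall i j, (i <= j)%nat -> (G i <= G j)%nat.

(* The factor [2 ^ (i + 6)] is what makes the [G j]-neighbourhoods of the
   multiples of all later periods [period j] cover at most a proportion [1/8]
   of the multiples of [period k]. *)
Fixpoint period (j : nat) : nat :=
  match j with
  | O => 2 * G O + 1
  | S i => 2 ^ (i + 6) * (2 * G (S i) + 1) * period i
  end%nat.

Lemma period_pos (j : nat) : (1 <= period j)%nat.
Proof.
  induction j as [|j IH]; cbn [period]; [lia|].
  assert (H := Nat.pow_gt_lin_r 2 (j + 6) ltac:(lia)). nia.
Qed.

Lemma period_ge (j : nat) : (2 * G j + j + 1 <= period j)%nat.
Proof.
  destruct j as [|j]; cbn [period]; [lia|].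
  assert (H := Nat.pow_gt_lin_r 2 (j + 6) ltac:(lia)). assert (H1 := period_pos j).
  set (q := (2 ^ (j + 6))%nat) in *. set (g := (2 * G (S j) + 1)%nat).
  assert (q * g <= q * g * period j)%nat by nia. nia.
Qed.

Lemma period_gap (k j : nat) : (k < j)%nat ->
  (2 ^ (j + 5) * (2 * G j + 1) * period k <= period j)%nat.
Proof.
  induction 1 as [|j Hkj IH]; cbn [period].
  - replace (S k + 5)%nat with (k + 6)%nat by lia. lia.
  - replace (S j + 5)%nat with (j + 6)%nat by lia.
    apply Nat.mul_le_mono_l.
    assert (H := Nat.pow_gt_lin_r 2 (j + 5) ltac:(lia)).
    set (c := (2 ^ (j + 5) * (2 * G j + 1))%nat) in IH.
    assert (period k <= c * period k)%nat by nia. lia.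
Qed.

Definition near_multiple (j n : nat) : Prop :=
  exists s, (1 <= s /\ n <= s * period j + G j /\ s * period j <= n + G j)%nat.

Definition hit_set (k n : nat) : Prop :=
  (exists t, (1 <= t)%nat /\ n = (t * period k)%nat) /\
  forall j, (k < j)%nat -> ~ near_multiple j n.

Lemma hit_set_ge (k n : nat) : hit_set k n -> (period k <= n)%nat.
Proof. intros [[t [Ht ->]] _]. nia. Qed.

Lemma hit_set_inj (k j n : nat) : hit_set k n -> hit_set j n -> k = j.
Proof.
  intros [[t [Ht En]] Hk] [[s [Hs Es]] Hj].
  destruct (Nat.lt_total k j) as [Hkj|[|Hjk]]; [exfalso|assumption|exfalso].
  - apply (Hk j Hkj). exists s. lia.
  - apply (Hj k Hjk). exists t. lia.
Qed.

Lemma hit_set_gap (k j n m : nat) : hit_set k n -> hit_set j m -> (n < m)%nat ->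
  (G k < m - n /\ G j < m - n)%nat.
Proof.
  intros [[t [Ht En]] Hk] [[s [Hs Em]] Hj] Hnm.
  destruct (Nat.lt_total k j) as [Hkj|[<-|Hjk]].
  - assert (G j < m - n)%nat.
    { apply Nat.nle_gt. intros Hle. apply (Hk j Hkj). exists s. lia. }
    assert (G k <= G j)%nat by (apply G_mono; lia). lia.
  - assert (H := period_ge k). assert (t < s)%nat by nia. nia.
  - assert (G k < m - n)%nat.
    { apply Nat.nle_gt. intros Hle. apply (Hj k Hjk). exists t. lia. }
    assert (G j <= G k)%nat by (apply G_mono; lia). lia.
Qed.

Lemma near_multiple_lt (j n : nat) : near_multiple j n -> (j < n)%nat.
Proof. intros [s Hs]. assert (H := period_ge j). nia. Qed.

Lemma count_near_multiple (j N : nat) :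
  (count_upto (near_multiple j) N <= (N + G j) / period j * (2 * G j + 1))%nat.
Proof.
  set (P := period j). assert (HP := period_ge j). fold P in HP.
  eapply Nat.le_trans; [|apply (count_upto_exists_lt
    (fun i n => S i * P - G j <= n <= S i * P + G j)%nat)].
  - apply count_upto_mono. intros n Hn [s [Hs [H1 H2]]]. exists (s - 1)%nat.
    replace (S (s - 1)) with s by lia. split; [|lia].
    enough (s <= (N + G j) / P)%nat by lia.
    apply Nat.div_le_lower_bound; lia.
  - intros i _. eapply Nat.le_trans; [apply count_upto_interval; intros n Hn; exact Hn|]. lia.
Qed.

Lemma count_near_multiple_small (k j N : nat) : (k < j)%nat ->
  (count_upto (near_multiple j) N * (2 ^ (j + 4) * period k) <= N)%nat.
Proof.
  intros Hkj.
  assert (Hc := count_near_multiple j N). assert (Hgap := period_gap k j Hkj).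
  assert (HP := period_ge j). assert (Hpk := period_pos k).
  set (P := period j) in *. set (T := ((N + G j) / P)%nat) in *.
  assert (HT : (T * P <= N + G j)%nat)
    by (unfold T; rewrite Nat.mul_comm; apply Nat.Div0.mul_div_le).
  rewrite Nat.pow_add_r in Hgap |- *. set (q := (2 ^ j)%nat) in *.
  destruct T as [|T]; [nia|].
  assert (HNG : (G j < N)%nat) by nia.
  assert (count_upto (near_multiple j) N * (q * 2 ^ 5 * period k)
          <= S T * P)%nat by nia.
  simpl in *. nia.
Qed.

Lemma count_near_multiple_above (k N : nat) :
  INR (count_upto (fun n => exists j, (j < N)%nat /\ (k < j)%nat /\ near_multiple j n) N)
  <= INR N / (8 * INR (period k)).
Proof.
  assert (Hpk : 0 < INR (period k)) by (apply lt_0_INR, period_pos).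
  assert (HN : 0 <= INR N / (8 * INR (period k)))
    by (apply Rdiv_le_0_compat; [apply pos_INR|lra]).
  eapply Rle_trans; [apply (count_upto_exists_lt_geom _ (INR N / (8 * INR (period k))))|].
  - intros j _. destruct (Nat.lt_ge_cases k j) as [Hkj|Hjk].
    + rewrite (count_upto_ext _ (near_multiple j)) by tauto.
      assert (H := le_INR _ _ (count_near_multiple_small k j N Hkj)).
      rewrite !mult_INR, pow_INR in H.
      assert (H2 : 0 < 2 ^ (j + 4)) by (apply pow_lt; lra).
      replace (INR N / (8 * INR (period k)) / 2 ^ S j)
        with (INR N / (2 ^ (j + 4) * INR (period k)))
        by (rewrite pow_add; simpl; field; split; [lra|apply pow_nonzero; lra]).
      apply Rle_div_r; [nra|]. replace (INR 2) with 2 in H by (simpl; lra). lra.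
    + rewrite count_upto_empty by (intros n [Hkj _]; lia).
      simpl INR. apply Rdiv_le_0_compat; [exact HN|apply pow_lt; lra].
  - assert (0 < / 2 ^ N) by (apply Rinv_0_lt_compat, pow_lt; lra). nra.
Qed.

Lemma INR_div_ge (N P : nat) : (0 < P)%nat -> INR N / INR P - 1 <= INR (N / P).
Proof.
  intros HP. assert (HP' : 0 < INR P) by (apply lt_0_INR; lia).
  assert (H : INR N <= INR P * INR (N / P) + INR P).
  { rewrite <- mult_INR, <- plus_INR. apply le_INR.
    assert (Hm := Nat.div_mod N P ltac:(lia)). assert (Nat.modulo N P < P)%nat
      by (apply Nat.mod_upper_bound; lia). lia. }
  apply (Rmult_le_reg_l (INR P)); [exact HP'|].
  replace (INR P * (INR N / INR P - 1)) with (INR N - INR P) by (field; lra). lra.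
Qed.

Lemma hit_set_density (k N : nat) : (4 * period k <= N)%nat ->
  INR N / (2 * INR (period k)) <= INR (count_upto (hit_set k) N).
Proof.
  intros HN. set (P := period k). assert (HP := period_pos k). fold P in HP.
  set (far := fun n => exists j, (j < N)%nat /\ (k < j)%nat /\ near_multiple j n).
  assert (Hmult : (N / P <= count_upto (fun n => exists t, (1 <= t)%nat /\ n = (t * P)%nat) N)%nat)
    by (apply count_upto_multiples; [lia|intros t Ht; exists t; auto]).
  assert (Hsplit : (count_upto (fun n => exists t, (1 <= t)%nat /\ n = (t * P)%nat) N
                    <= count_upto (hit_set k) N + count_upto far N)%nat).
  { eapply Nat.le_trans; [|apply count_upto_union]. apply count_upto_mono.
    intros n Hn Hmul.
    destruct (classic (exists j, (k < j)%nat /\ near_multiple j n)) as [[j [Hkj Hnear]]|Hnone].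
    - right. exists j. assert (H := near_multiple_lt j n Hnear). repeat split; auto; lia.
    - left. split; [exact Hmul|]. intros j Hkj Hnear. apply Hnone. exists j. auto. }
  assert (Hfar := count_near_multiple_above k N). fold P far in Hfar.
  assert (Hdiv := INR_div_ge N P ltac:(lia)).
  apply le_INR in Hmult, Hsplit. rewrite plus_INR in Hsplit.
  assert (HP' : 0 < INR P) by (apply lt_0_INR; lia).
  assert (HN' : 4 * INR P <= INR N)
    by (replace 4 with (INR 4) by (simpl; lra); rewrite <- mult_INR; apply le_INR, HN).
  assert (Hq : 4 <= INR N / INR P) by (apply (Rle_div_r 4); lra).
  replace (INR N / (8 * INR P)) with (/ 8 * (INR N / INR P)) in Hfar by (field; lra).
  replace (INR N / (2 * INR P)) with (/ 2 * (INR N / INR P)) by (field; lra).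
  lra.
Qed.

End HitSets.

(** * The vector [sum_p b_p z^p / p!] and its derivatives *)

Definition exp_series (b : nat -> C) : coeffs :=
  fun p => Cmult (RtoC (/ INR (fact p))) (b p).

Lemma Dop_exp_series (b : nat -> C) :
  Dop (exp_series b) = exp_series (fun m => b (S m)).
Proof.
  apply functional_extensionality. intros m. unfold Dop, exp_series.
  rewrite Cmult_assoc, <- RtoC_mult. do 2 f_equal.
  rewrite fact_simpl, mult_INR.
  assert (0 < INR (fact m)) by apply lt_0_INR, lt_O_fact.
  assert (0 < INR (S m)) by apply lt_0_INR, Nat.lt_0_succ.
  field. lra.
Qed.

Lemma iter_Dop_exp_series (b : nat -> C) (n : nat) :
  Nat.iter n Dop (exp_series b) = exp_series (fun m => b (n + m)%nat).
Proof.
  induction n as [|n IH]; [reflexivity|].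
  change (Dop (Nat.iter n Dop (exp_series b)) = exp_series (fun m => b (S n + m)%nat)).
  rewrite IH, Dop_exp_series. f_equal. apply functional_extensionality. intros m.
  f_equal. lia.
Qed.

Lemma fact_ge_pow2 (m : nat) : ((m + 1) * 2 ^ m <= 8 * fact m)%nat.
Proof.
  induction m as [|m IH]; [simpl; lia|].
  destruct (Nat.le_gt_cases m 1) as [Hm|Hm].
  - destruct m as [|[|]]; simpl; lia.
  - rewrite fact_simpl, Nat.pow_succ_r'. nia.
Qed.

Lemma inv4_pow (m : nat) : (/ 4) ^ m = (/ 2) ^ m * (/ 2) ^ m.
Proof. rewrite <- Rpow_mult_distr. f_equal. field. Qed.

Lemma exp_series_sq_le (b : nat -> C) (c : R) (m : nat) :
  0 <= c -> Cmod (b m) <= c * INR (S m) ->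
  Cmod (exp_series b m) ^ 2 <= 64 * c ^ 2 * (/ 4) ^ m.
Proof.
  intros Hc Hb. unfold exp_series.
  rewrite Cmod_mult, Cmod_R, Rabs_pos_eq
    by (apply Rlt_le, Rinv_0_lt_compat, lt_0_INR, lt_O_fact).
  assert (Hf : 0 < INR (fact m)) by apply lt_0_INR, lt_O_fact.
  assert (Hfact := le_INR _ _ (fact_ge_pow2 m)).
  rewrite mult_INR, mult_INR, pow_INR, plus_INR, <- S_INR in Hfact.
  replace (INR 2) with 2 in Hfact by reflexivity. replace (INR 8) with 8 in Hfact by (simpl; lra).
  assert (H2 : 0 < 2 ^ m) by (apply pow_lt; lra).
  assert (Hbound : / INR (fact m) * Cmod (b m) <= 8 * c * (/ 2) ^ m).
  { rewrite pow_inv. apply (Rmult_le_reg_l (INR (fact m) * 2 ^ m)); [nra|].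
    field_simplify; [|lra|lra]. assert (0 <= Cmod (b m)) by apply Cmod_ge_0. nra. }
  rewrite inv4_pow.
  replace (64 * c ^ 2 * ((/ 2) ^ m * (/ 2) ^ m)) with ((8 * c * (/ 2) ^ m) ^ 2) by ring.
  apply pow_incr. split; [|exact Hbound].
  apply Rmult_le_pos; [apply Rlt_le, Rinv_0_lt_compat, Hf|apply Cmod_ge_0].
Qed.

Lemma ex_series_nonneg_le (a b : nat -> R) :
  (forall n, 0 <= a n <= b n) -> ex_series b -> ex_series a.
Proof.
  intros Hab. apply (@ex_series_le R_AbsRing R_CompleteNormedModule).
  intros n. change (Rabs (a n) <= b n). rewrite Rabs_pos_eq; apply Hab.
Qed.

Lemma ex_series_geom_scal (c q : R) : Rabs q < 1 -> ex_series (fun m => c * q ^ m).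
Proof. intros Hq. apply (ex_series_scal_l c (fun m => q ^ m)), ex_series_geom, Hq. Qed.

Lemma in_H2_exp_series (b : nat -> C) (c : R) :
  0 <= c -> (forall m, Cmod (b m) <= c * INR (S m)) -> in_H2 (exp_series b).
Proof.
  intros Hc Hb. apply (ex_series_nonneg_le _ (fun m => 64 * c ^ 2 * (/ 4) ^ m)).
  - intros m. split; [apply pow2_ge_0|]. apply exp_series_sq_le; auto.
  - apply ex_series_geom_scal. rewrite Rabs_pos_eq; lra.
Qed.

Section BlockSequence.

Variables (G L : nat -> nat) (w : nat -> nat -> C).
Hypothesis G_mono : forall i j, (i <= j)%nat -> (G i <= G j)%nat.
Hypothesis L_le_G : forall k, (L k <= G k)%nat.
Hypothesis w_le_G : forall k i, Cmod (w k i) <= INR (G k).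

Definition in_block (k n p : nat) : Prop := hit_set G k n /\ (n <= p < n + L k)%nat.

Lemma in_block_unique (k n j m p : nat) :
  in_block k n p -> in_block j m p -> k = j /\ n = m.
Proof.
  intros [Hk Hp] [Hj Hq].
  destruct (Nat.lt_total n m) as [Hnm|[<-|Hmn]].
  - assert (H := hit_set_gap G G_mono k j n m Hk Hj Hnm). specialize (L_le_G k). lia.
  - split; [exact (hit_set_inj G k j n Hk Hj)|reflexivity].
  - assert (H := hit_set_gap G G_mono j k m n Hj Hk Hmn). specialize (L_le_G j). lia.
Qed.

Definition block_seq (p : nat) : C :=
  match excluded_middle_informative
          (exists! kn : nat * nat, in_block (fst kn) (snd kn) p) with
  | left H => let kn := proj1_sig (constructive_definite_description _ H) in
              w (fst kn) (p - snd kn)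
  | right _ => 0
  end.

Lemma block_seq_in_block (k n p : nat) : in_block k n p -> block_seq p = w k (p - n).
Proof.
  intros Hkn. unfold block_seq.
  destruct excluded_middle_informative as [H|H].
  - destruct (constructive_definite_description _ H) as [[j m] Hjm]. simpl.
    destruct (in_block_unique j m k n p Hjm Hkn) as [-> ->]. reflexivity.
  - exfalso. apply H. exists (k, n). split; [exact Hkn|].
    intros [j m] Hjm. destruct (in_block_unique k n j m p Hkn Hjm) as [-> ->]. reflexivity.
Qed.

Lemma block_seq_cases (p : nat) :
  (exists k n, in_block k n p /\ block_seq p = w k (p - n)) \/ block_seq p = 0.
Proof.
  destruct (classic (exists k n, in_block k n p)) as [[k [n Hkn]]|Hnone].
  - left. exists k, n. split; [exact Hkn|]. apply block_seq_in_block, Hkn.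
  - right. unfold block_seq. destruct excluded_middle_informative as [H|]; [|reflexivity].
    exfalso. destruct H as [[k n] [Hkn _]]. apply Hnone. exists k, n. exact Hkn.
Qed.

Lemma block_seq_le (p : nat) : Cmod (block_seq p) <= INR p.
Proof.
  destruct (block_seq_cases p) as [[k [n [[Hk Hp] ->]]] | ->].
  - eapply Rle_trans; [apply w_le_G|]. apply le_INR.
    assert (H1 := hit_set_ge G k n Hk). assert (H2 := period_ge G k). lia.
  - rewrite Cmod_0. apply pos_INR.
Qed.

Lemma block_seq_head (k n m : nat) :
  hit_set G k n -> (m < L k)%nat -> block_seq (n + m) = w k m.
Proof.
  intros Hk Hm. rewrite (block_seq_in_block k n); [f_equal; lia|split; [exact Hk|lia]].
Qed.

Lemma block_seq_tail (k n m : nat) :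
  hit_set G k n -> (L k <= m)%nat -> Cmod (block_seq (n + m)) <= INR m.
Proof.
  intros Hk Hm.
  destruct (block_seq_cases (n + m)) as [[j [s [[Hj Hs] ->]]] | ->].
  - destruct (Nat.lt_total s n) as [Hsn|[->|Hns]].
    + exfalso. assert (H := hit_set_gap G G_mono j k s n Hj Hk Hsn).
      specialize (L_le_G j). lia.
    + exfalso. assert (k = j) by exact (hit_set_inj G k j n Hk Hj). subst. lia.
    + eapply Rle_trans; [apply w_le_G|]. apply le_INR.
      assert (H := hit_set_gap G G_mono k j n s Hk Hj Hns). lia.
  - rewrite Cmod_0. apply pos_INR.
Qed.

Lemma in_H2_iter_block (n : nat) : in_H2 (Nat.iter n Dop (exp_series block_seq)).
Proof.
  rewrite iter_Dop_exp_series. apply (in_H2_exp_series _ (INR (S n))); [apply pos_INR|].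
  intros m. eapply Rle_trans; [apply block_seq_le|].
  rewrite <- mult_INR. apply le_INR. nia.
Qed.

Lemma iter_block_head (k n m : nat) : hit_set G k n -> (m < L k)%nat ->
  Nat.iter n Dop (exp_series block_seq) m = Cmult (RtoC (/ INR (fact m))) (w k m).
Proof.
  intros Hk Hm. rewrite iter_Dop_exp_series. unfold exp_series.
  rewrite (block_seq_head k) by assumption. reflexivity.
Qed.

Lemma iter_block_tail (k n m : nat) : hit_set G k n -> (L k <= m)%nat ->
  Cmod (Nat.iter n Dop (exp_series block_seq) m) ^ 2 <= 64 * (/ 4) ^ m.
Proof.
  intros Hk Hm. rewrite iter_Dop_exp_series.
  replace (64 * (/ 4) ^ m) with (64 * 1 ^ 2 * (/ 4) ^ m) by ring.
  apply exp_series_sq_le; [lra|].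
  eapply Rle_trans; [apply (block_seq_tail k n m Hk Hm)|].
  rewrite Rmult_1_l. apply le_INR. lia.
Qed.

End BlockSequence.

(** * Approximation in [H^2] *)

Lemma Series_tail_lt (f : nat -> R) : ex_series f -> forall d, 0 < d ->
  exists M, forall N, (M <= N)%nat -> Series (fun m => if (m <? N)%nat then 0 else f m) < d.
Proof.
  intros Hf d Hd.
  assert (Hlim : is_lim_seq (sum_n f) (Series f)) by exact (Series_correct f Hf).
  apply is_lim_seq_spec in Hlim. destruct (Hlim (mkposreal d Hd)) as [M HM]. simpl in HM.
  exists (S M). intros N HN.
  rewrite (Series_incr_n_aux _ N)
    by (intros m Hm; destruct (Nat.ltb_spec m N); [reflexivity|lia]).
  rewrite (Series_ext _ (fun m => f (N + m)%nat))
    by (intros m; destruct (Nat.ltb_spec (N + m) N); [lia|reflexivity]).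
  specialize (HM (pred N) ltac:(lia)). rewrite sum_n_Reals in HM.
  rewrite (Series_incr_n f N) in HM by (lia || exact Hf).
  apply Rabs_lt_between in HM. lra.
Qed.

Lemma inv2_pow_anti (m n : nat) : (m <= n)%nat -> (/ 2) ^ n <= (/ 2) ^ m.
Proof.
  intros Hmn. rewrite !pow_inv. apply Rinv_le_contravar; [apply pow_lt; lra|].
  apply Rle_pow; [lra|exact Hmn].
Qed.

Lemma Cmod_minus_sq_le (a b : C) : Cmod (Cminus a b) ^ 2 <= 2 * Cmod a ^ 2 + 2 * Cmod b ^ 2.
Proof.
  assert (H : Cmod (Cminus a b) <= Cmod a + Cmod b)
    by (eapply Rle_trans; [apply Cmod_triangle|rewrite Cmod_opp; lra]).
  assert (0 <= Cmod (Cminus a b)) by apply Cmod_ge_0.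
  assert (0 <= (Cmod a - Cmod b) ^ 2) by apply pow2_ge_0. nra.
Qed.

Lemma H2_dist_lt (g x : coeffs) (eps : R) : 0 < eps ->
  Series (fun m => Cmod (Cminus (g m) (x m)) ^ 2) < eps ^ 2 -> H2_dist g x < eps.
Proof.
  intros Heps HS. unfold H2_dist, H2_norm. rewrite <- (sqrt_pow2 eps) by lra.
  destruct (Rle_lt_dec (Series (fun m => Cmod (Cminus (g m) (x m)) ^ 2)) 0) as [H0|H0].
  - rewrite sqrt_neg_0 by exact H0. apply sqrt_lt_R0, pow_lt, Heps.
  - apply sqrt_lt_1_alt. lra.
Qed.

Lemma Series_dist_le (g x : coeffs) (N : nat) : in_H2 g ->
  (forall m, (m < N)%nat -> Cmod (Cminus (g m) (x m)) ^ 2 <= 2 * (/ 4) ^ N) ->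
  (forall m, (N <= m)%nat -> Cmod (x m) ^ 2 <= 64 * (/ 4) ^ m) ->
  Series (fun m => Cmod (Cminus (g m) (x m)) ^ 2)
  <= 2 * Series (fun m => if (m <? N)%nat then 0 else Cmod (g m) ^ 2) + 260 * (/ 2) ^ N.
Proof.
  intros Hg Hhead Htail.
  set (tail := fun m => if (m <? N)%nat then 0 else Cmod (g m) ^ 2).
  assert (Htail_ex : ex_series tail).
  { refine (ex_series_nonneg_le _ _ _ Hg). intros m.
    unfold tail. destruct (m <? N)%nat; split; try lra; apply pow2_ge_0. }
  (* [c / 2^m] dominates [2 / 4^N] for [m < N] and [128 / 4^m] for [m >= N]. *)
  set (c := 130 * (/ 2) ^ N).
  assert (Hgeom : is_series (fun m => c * (/ 2) ^ m) (c * 2)).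
  { replace (c * 2) with (c * / (1 - / 2)) by field.
    apply (is_series_scal_l c (fun m => (/ 2) ^ m)), is_series_geom. rewrite Rabs_pos_eq; lra. }
  assert (Hmaj : is_series (fun m => 2 * tail m + c * (/ 2) ^ m) (2 * Series tail + c * 2)).
  { apply (is_series_plus (fun m => 2 * tail m) _ (2 * Series tail) (c * 2)); [|exact Hgeom].
    apply (is_series_scal_l 2 tail), Series_correct, Htail_ex. }
  replace (2 * Series tail + 260 * (/ 2) ^ N) with (2 * Series tail + c * 2) by (unfold c; ring).
  rewrite <- (is_series_unique _ _ Hmaj). apply Series_le; [|eexists; exact Hmaj].
  intros m. split; [apply pow2_ge_0|].
  assert (Hm2 : 0 <= (/ 2) ^ m) by (apply pow_le; lra).
  assert (HN2 : 0 <= (/ 2) ^ N) by (apply pow_le; lra).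
  unfold tail, c. destruct (Nat.ltb_spec m N) as [Hm|Hm].
  - eapply Rle_trans; [apply Hhead, Hm|]. rewrite inv4_pow.
    assert (H := inv2_pow_anti m N ltac:(lia)). nra.
  - eapply Rle_trans; [apply Cmod_minus_sq_le|].
    assert (H := Htail m Hm). rewrite inv4_pow in H.
    assert (H' := inv2_pow_anti N m Hm). nra.
Qed.

Lemma H2_approx (g : coeffs) (eps : R) : in_H2 g -> 0 < eps ->
  exists N0, forall N x, (N0 <= N)%nat ->
    (forall m, (m < N)%nat -> Cmod (Cminus (g m) (x m)) ^ 2 <= 2 * (/ 4) ^ N) ->
    (forall m, (N <= m)%nat -> Cmod (x m) ^ 2 <= 64 * (/ 4) ^ m) ->
    H2_dist g x < eps.
Proof.
  intros Hg Heps. assert (He2 : 0 < eps ^ 2) by (apply pow_lt, Heps).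
  destruct (Series_tail_lt _ Hg (eps ^ 2 / 4) ltac:(lra)) as [M0 HM0].
  destruct (pow_lt_1_zero (/ 2) ltac:(rewrite Rabs_pos_eq; lra) (eps ^ 2 / 1040) ltac:(lra))
    as [M1 HM1].
  exists (Nat.max M0 M1). intros N x HN Hhead Htail. apply H2_dist_lt; [exact Heps|].
  eapply Rle_lt_trans; [apply (Series_dist_le g x N Hg Hhead Htail)|].
  specialize (HM0 N ltac:(lia)). specialize (HM1 N ltac:(lia)).
  rewrite Rabs_pos_eq in HM1 by (apply pow_le; lra). lra.
Qed.

(** * Dyadic polynomials *)

Definition int_of_code (n : nat) : Z := let (a, b) := of_nat n in (Z.of_nat a - Z.of_nat b)%Z.

Definition code_of_int (z : Z) : nat := to_nat (Z.to_nat z, Z.to_nat (- z)).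

Lemma int_of_code_of_int (z : Z) : int_of_code (code_of_int z) = z.
Proof. unfold int_of_code, code_of_int. rewrite cancel_of_to. lia. Qed.

Definition gauss_of_code (n : nat) : C :=
  let (a, b) := of_nat n in (IZR (int_of_code a), IZR (int_of_code b)).

Definition code_of_gauss (x y : Z) : nat := to_nat (code_of_int x, code_of_int y).

Lemma gauss_of_code_of_gauss (x y : Z) : gauss_of_code (code_of_gauss x y) = (IZR x, IZR y).
Proof.
  unfold gauss_of_code, code_of_gauss. rewrite cancel_of_to, !int_of_code_of_int. reflexivity.
Qed.

Fixpoint nth_code (s i : nat) : nat :=
  match i with
  | O => fst (of_nat s)
  | S i => nth_code (snd (of_nat s)) i
  end.

Fixpoint code_of_prefix (e : nat -> nat) (N : nat) : nat :=
  match N with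
  | O => O
  | S N => to_nat (e O, code_of_prefix (fun i => e (S i)) N)
  end.

Lemma nth_code_of_prefix (e : nat -> nat) (N i : nat) :
  (i < N)%nat -> nth_code (code_of_prefix e N) i = e i.
Proof.
  revert e i. induction N as [|N IH]; intros e i Hi; [lia|].
  destruct i as [|i]; cbn [code_of_prefix nth_code]; rewrite cancel_of_to; [reflexivity|].
  apply (IH (fun i => e (S i))). lia.
Qed.

Definition dyadic_len (k : nat) : nat := fst (of_nat k).

Definition dyadic_vec (k i : nat) : C :=
  if (i <? dyadic_len k)%nat
  then Cmult (RtoC (/ 2 ^ dyadic_len k)) (gauss_of_code (nth_code (snd (of_nat k)) i))
  else 0.

Lemma dyadic_vec_surj (N : nat) (x y : nat -> Z) : exists k, dyadic_len k = N /\
  forall i, (i < N)%nat -> dyadic_vec k i = Cmult (RtoC (/ 2 ^ N)) (IZR (x i), IZR (y i)).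
Proof.
  exists (to_nat (N, code_of_prefix (fun i => code_of_gauss (x i) (y i)) N)).
  unfold dyadic_vec, dyadic_len. rewrite cancel_of_to. cbn [fst snd].
  split; [reflexivity|]. intros i Hi.
  destruct (Nat.ltb_spec i N); [|lia].
  rewrite nth_code_of_prefix, gauss_of_code_of_gauss by exact Hi. reflexivity.
Qed.

Lemma round_up_close (r D : R) : 0 < D -> Rabs (r - / D * IZR (up (r * D))) <= / D.
Proof.
  intros HD. destruct (archimed (r * D)) as [H1 H2].
  replace (r - / D * IZR (up (r * D))) with (- (IZR (up (r * D)) - r * D) / D) by (field; lra).
  unfold Rdiv. rewrite Rabs_mult, Rabs_Ropp, Rabs_inv, (Rabs_pos_eq D), Rabs_pos_eq by lra.
  assert (0 < / D) by (apply Rinv_0_lt_compat; lra). nra.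
Qed.

Lemma Cmod_sq (z : C) : Cmod z ^ 2 = fst z ^ 2 + snd z ^ 2.
Proof. unfold Cmod. rewrite pow2_sqrt; [reflexivity|]. nra. Qed.

Lemma dyadic_vec_approx (g : coeffs) (N : nat) : exists k, dyadic_len k = N /\
  forall i, (i < N)%nat -> Cmod (Cminus (g i) (dyadic_vec k i)) ^ 2 <= 2 * (/ 4) ^ N.
Proof.
  set (D := 2 ^ N). assert (HD : 0 < D) by (apply pow_lt; lra).
  destruct (dyadic_vec_surj N (fun i => up (fst (g i) * D)) (fun i => up (snd (g i) * D)))
    as [k [Hlen Hvec]].
  exists k. split; [exact Hlen|]. intros i Hi. rewrite Hvec by exact Hi.
  rewrite Cmod_sq. cbn [fst snd Cminus Cmult Cplus Copp RtoC]. fold D.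
  assert (Hre := round_up_close (fst (g i)) D HD).
  assert (Him := round_up_close (snd (g i)) D HD).
  assert (Hre2 : (fst (g i) - / D * IZR (up (fst (g i) * D))) ^ 2 <= (/ D) ^ 2)
    by (rewrite <- pow2_abs; apply pow_incr; split; [apply Rabs_pos|exact Hre]).
  assert (Him2 : (snd (g i) - / D * IZR (up (snd (g i) * D))) ^ 2 <= (/ D) ^ 2)
    by (rewrite <- pow2_abs; apply pow_incr; split; [apply Rabs_pos|exact Him]).
  rewrite inv4_pow, pow_inv. fold D. lra.
Qed.

Definition dyadic_weight (k i : nat) : C := Cmult (RtoC (INR (fact i))) (dyadic_vec k i).

Lemma dyadic_weight_div_fact (k i : nat) :
  Cmult (RtoC (/ INR (fact i))) (dyadic_weight k i) = dyadic_vec k i.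
Proof.
  unfold dyadic_weight. rewrite Cmult_assoc, <- RtoC_mult, Rinv_l, Cmult_1_l; [reflexivity|].
  apply not_0_INR, fact_neq_0.
Qed.

Lemma le_INR_up (r : R) : r <= INR (Z.to_nat (up r)).
Proof.
  destruct (archimed r) as [Hup _].
  destruct (Z.le_gt_cases (up r) 0) as [Hle|Hgt].
  - replace (Z.to_nat (up r)) with 0%nat by lia. apply IZR_le in Hle. simpl. lra.
  - rewrite INR_IZR_INZ, Z2Nat.id by lia. lra.
Qed.

Lemma nat_bound_on_prefix (u : nat -> R) (N : nat) :
  {B : nat | forall i, (i < N)%nat -> u i <= INR B}.
Proof.
  induction N as [|N [B HB]]; [exists O; intros i Hi; lia|].
  exists (Nat.max B (Z.to_nat (up (u N)))). intros i Hi.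
  destruct (Nat.eq_dec i N) as [->|Hne].
  - eapply Rle_trans; [apply le_INR_up|apply le_INR, Nat.le_max_r].
  - eapply Rle_trans; [apply HB; lia|apply le_INR, Nat.le_max_l].
Qed.

Definition dyadic_bound (k : nat) : nat :=
  proj1_sig (nat_bound_on_prefix (fun i => Cmod (dyadic_weight k i)) (dyadic_len k)).

Lemma dyadic_weight_le (k i : nat) : Cmod (dyadic_weight k i) <= INR (dyadic_bound k).
Proof.
  destruct (Nat.lt_ge_cases i (dyadic_len k)) as [Hi|Hi].
  - exact (proj2_sig (nat_bound_on_prefix _ _) i Hi).
  - unfold dyadic_weight, dyadic_vec. destruct (Nat.ltb_spec i (dyadic_len k)); [lia|].
    rewrite Cmult_0_r, Cmod_0. apply pos_INR.
Qed.

Fixpoint partial_sum (u : nat -> nat) (k : nat) : nat :=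
  match k with
  | O => u O
  | S k => (partial_sum u k + u (S k))%nat
  end.

Lemma partial_sum_mono (u : nat -> nat) (i j : nat) :
  (i <= j)%nat -> (partial_sum u i <= partial_sum u j)%nat.
Proof. induction 1; cbn [partial_sum]; lia. Qed.

Lemma partial_sum_ge (u : nat -> nat) (k : nat) : (u k <= partial_sum u k)%nat.
Proof. destruct k; cbn [partial_sum]; lia. Qed.

Definition dyadic_gap : nat -> nat := partial_sum (fun i => dyadic_len i + dyadic_bound i)%nat.

Lemma dyadic_gap_mono (i j : nat) : (i <= j)%nat -> (dyadic_gap i <= dyadic_gap j)%nat.
Proof. apply partial_sum_mono. Qed.

Lemma dyadic_len_bound_le_gap (k : nat) : (dyadic_len k + dyadic_bound k <= dyadic_gap k)%nat.
Proof. exact (partial_sum_ge (fun i => dyadic_len i + dyadic_bound i)%nat k). Qed.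

Lemma dyadic_len_le_gap (k : nat) : (dyadic_len k <= dyadic_gap k)%nat.
Proof. assert (H := dyadic_len_bound_le_gap k). lia. Qed.

Lemma dyadic_weight_le_gap (k i : nat) : Cmod (dyadic_weight k i) <= INR (dyadic_gap k).
Proof.
  eapply Rle_trans; [apply dyadic_weight_le|]. apply le_INR.
  assert (H := dyadic_len_bound_le_gap k). lia.
Qed.

Theorem mainTheorem6 : D_frequently_hypercyclic_H2.
Proof.
  assert (Hiter := in_H2_iter_block _ _ _ dyadic_gap_mono dyadic_len_le_gap dyadic_weight_le_gap).
  exists (exp_series (block_seq dyadic_gap dyadic_len dyadic_weight)).
  split; [split; [exact (Hiter 0%nat)|exact (Hiter 1%nat)]|split].
  { intros n _. split; [exact (Hiter n)|exact (Hiter (S n))]. }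
  intros U [HU_H2 HU_open] [g Hg].
  destruct (HU_open g Hg) as [eps [Heps Hball]].
  destruct (H2_approx g eps (HU_H2 g Hg) Heps) as [N HN].
  destruct (dyadic_vec_approx g N) as [k [Hlen Hk]].
  set (P := period dyadic_gap k). assert (HP : 0 < INR P) by apply lt_0_INR, period_pos.
  apply (lower_density_pos _ (/ (2 * INR P)) (4 * P)); [apply Rinv_0_lt_compat; lra|].
  intros M HM. eapply Rle_trans; [apply (hit_set_density _ k M HM)|].
  apply le_INR, count_upto_mono. intros n _ Hn. apply Hball; [apply Hiter|].
  apply (HN N); [lia|intros m Hm|intros m Hm].
  - rewrite (iter_block_head _ _ _ dyadic_gap_mono dyadic_len_le_gap k) by (assumption || lia).
    rewrite dyadic_weight_div_fact. apply Hk, Hm.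
  - apply (iter_block_tail _ _ _ dyadic_gap_mono dyadic_len_le_gap dyadic_weight_le_gap k n m Hn).
    lia.
Qed.
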